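(* Let $A$ be a regular ring and $S$ a metrizable subset of an $A$-module $M$. Then the set $\mathrm{conv}(S)=\{a_{1}x_{1}+\cdots+a_{n}x_{n}: n\ge1,\ x_{i}\in S,\ a_{i}\in B(A),\ a_1\oplus\cdots\oplus a_n=1\}$ is also a metrizable subset of $M$.
   Context: A regular ring is a commutative (unital) von Neumann regular ring. $B(A)$ is the set of idempotents of $A$; for pairwise disjoint idempotents $a_1,\dots,a_n$ ($a_ia_j=0$ for $i\ne j$), $a_1\oplus\cdots\oplus a_n$ denotes their sum. A subset $S$ of an $A$-module is metrizable if for all $x,y\in S$ the annihilator $\mathrm{Ann}(x-y)=\{a\in A: a(x-y)=0\}$ is a principal ideal of $A$. *)

From HB Require Import structures.
From mathcomp Require Import all_boot all_order all_algebra.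
Set Implicit Arguments. Unset Strict Implicit. Unset Printing Implicit Defensive.
Import GRing.Theory.
Local Open Scope ring_scope.

Definition regular_ring (A : comPzRingType) : Prop :=
  forall a : A, exists x : A, a = a * a * x.

Definition idempotent (A : comPzRingType) (a : A) : Prop := a * a = a.

Definition ann_principal (A : comPzRingType) (M : lmodType A) (v : M) : Prop :=
  exists g : A, forall a : A, a *: v = 0 <-> exists r : A, a = r * g.

Definition metrizable (A : comPzRingType) (M : lmodType A) (S : M -> Prop) : Prop :=
  forall x y : M, S x -> S y -> ann_principal (x - y).

Definition conv (A : comPzRingType) (M : lmodType A) (S : M -> Prop) (z : M) : Prop :=
  exists (n : nat) (a : 'I_n -> A) (x : 'I_n -> M),
    (1 <= n)%N /\
    (forall i, S (x i)) /\
    (forall i, idempotent (a i)) /\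
    (forall i j, i != j -> a i * a j = 0) /\
    \sum_(i < n) a i = 1 /\
    z = \sum_(i < n) a i *: x i.

From Pilot Require Import Defs.
From HB Require Import structures.
From mathcomp Require Import all_boot all_order all_algebra.
Set Implicit Arguments. Unset Strict Implicit. Unset Printing Implicit Defensive.
Import GRing.Theory.
Local Open Scope ring_scope.

(* In a regular ring every principal ideal gA is generated by an idempotent
   (e = gx where g = ggx), so Ann(u) principal means Ann(u) = {a | ae = a}
   for an idempotent e.  The heart of the proof is a local criterion: if
   c_1 + ... + c_m = 1 and c_k v = c_k u_k with every Ann(u_k) generated by
   an idempotent e_k, then Ann(v) is generated by c_1 e_1 + ... + c_m e_m.
   For z = sum_i a_i x_i and w = sum_j b_j y_j in conv(S), the products
   a_i b_j form a partition of unity indexed by pairs (i, j), and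
   a_i b_j (z - w) = a_i b_j (x_i - y_j) because the a_i (resp. b_j) are
   orthogonal idempotents; the criterion applied to u_(i,j) = x_i - y_j
   then gives the theorem. *)

Section Annihilators.
Variables (A : comPzRingType) (M : lmodType A).

Definition ann_idempotent (v : M) (e : A) : Prop :=
  Defs.idempotent e /\ forall a : A, a *: v = 0 <-> a * e = a.

Lemma ann_principal_idempotent (v : M) :
  regular_ring A -> ann_principal v -> exists e : A, ann_idempotent v e.
Proof.
move=> reg [g ann_g]; have [x g_gx] := reg g.
exists (g * x); split.
  by rewrite /Defs.idempotent mulrA -[g * x * g]mulrC !mulrA -g_gx.
move=> a; split=> [/ann_g [r ->] | <-].
  by rewrite -[r * g * (g * x)]mulrA [g * (g * x)]mulrA -g_gx.
by apply/ann_g; exists (a * x); rewrite -mulrA [x * g]mulrC mulrA.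
Qed.

Lemma ann_principal_local (I : finType) (c e : I -> A) (u : I -> M) (v : M) :
  \sum_k c k = 1 -> (forall k, c k *: v = c k *: u k) ->
  (forall k, ann_idempotent (u k) (e k)) -> ann_principal v.
Proof.
move=> sum_c cv_cu ann_u; exists (\sum_k c k * e k) => a; split.
  move=> av0; exists a.
  have ace_ac k : a * c k * e k = a * c k.
    apply/(proj2 (ann_u k)).
    by rewrite -scalerA -cv_cu scalerA mulrC -scalerA av0 scaler0.
  rewrite mulr_sumr -{1}[a]mulr1 -sum_c mulr_sumr.
  by apply: eq_bigr => k _; rewrite mulrA ace_ac.
have ceu0 k : (c k * e k) *: u k = 0.
  have [e_idem ann_uk] := ann_u k.
  by rewrite -scalerA (proj2 (ann_uk _) e_idem) scaler0.
move=> [r ->]; rewrite -scalerA scaler_suml big1 ?scaler0 // => k _.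
by rewrite mulrC -scalerA cv_cu scalerA mulrC ceu0.
Qed.

Lemma scale_orthogonal_sum n (a : 'I_n -> A) (x : 'I_n -> M) (i : 'I_n) :
  (forall k, Defs.idempotent (a k)) -> (forall k l, k != l -> a k * a l = 0) ->
  a i *: \sum_(k < n) a k *: x k = a i *: x i.
Proof.
move=> a_idem a_orth; rewrite scaler_sumr (bigD1 i) //= scalerA a_idem.
by rewrite big1 ?addr0 // => k k_i; rewrite scalerA a_orth ?scale0r // eq_sym.
Qed.

End Annihilators.

Lemma sum_product_partition (A : comPzRingType) (I J : finType)
    (a : I -> A) (b : J -> A) :
  \sum_i a i = 1 -> \sum_j b j = 1 -> \sum_(p : I * J) a p.1 * b p.2 = 1.
Proof.
move=> sum_a sum_b; rewrite -(pair_bigA _ (fun i j => a i * b j)) /=.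
rewrite -[1]mulr1 -{1}sum_a -sum_b mulr_suml.
by apply: eq_bigr => i _; rewrite mulr_sumr.
Qed.

Theorem mainTheorem17 (A : comPzRingType) (M : lmodType A) (S : M -> Prop) :
  regular_ring A -> metrizable S -> metrizable (conv S).
Proof.
move=> reg metS z w [n [a [x [_ [Sx [a_idem [a_orth [sum_a ->]]]]]]]]
  [m [b [y [_ [Sy [b_idem [b_orth [sum_b ->]]]]]]]].
have [e ann_e] : exists e : 'I_n * 'I_m -> A,
    forall p, ann_idempotent (x p.1 - y p.2) (e p).
  apply: (fin_all_exists (fun p : 'I_n * 'I_m =>
    ann_principal_idempotent reg (metS _ _ (Sx p.1) (Sy p.2)))).
apply: (ann_principal_local (sum_product_partition sum_a sum_b) _ ann_e).
move=> [i j] /=; rewrite !scalerBr; congr (_ - _).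
  by rewrite mulrC -scalerA scale_orthogonal_sum // scalerA mulrC.
by rewrite -scalerA scale_orthogonal_sum // scalerA.
Qed.
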